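(* Let $K$ be a field with $\operatorname{char}(K)\neq2$. There is a functor $\mathcal{C}\colon\mathbf{BX}(\mathbf{LeibAlg}_K)\to\mathbf{BICat}(\mathbf{LeibAlg}_K)$ which sends a braided crossed module $\mathcal{X}=(M,N,(\cdot_1,\cdot_2),\partial,(\{-,-\},\langle-,-\rangle))$ to $\mathcal{C}_{\mathcal{X}}=(M\rtimes N,N,\bar s,\bar t,\bar e,\bar k,(\bar\tau,\bar\psi))$ with $\bar s(m,n)=n$, $\bar t(m,n)=\partial m+n$, $\bar e(n)=(0,n)$, $\bar k((m,n),(m',\partial m+n))=(m+m',n)$, $\bar\tau_{n,n'}=(-2\{n,n'\},[n,n'])$, $\bar\psi_{n,n'}=(-2\langle n,n'\rangle,[n,n'])$, and sends a homomorphism of braided crossed modules $(f_1,f_2)\colon\mathcal{X}\to\mathcal{X}'$ to $(f_1\times f_2,f_2)\colon\mathcal{C}_{\mathcal{X}}\to\mathcal{C}_{\mathcal{X}'}$, which is a braided internal functor.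
   Context: A Leibniz $K$-algebra: bilinear bracket with $[x,[y,z]]=[[x,y],z]-[[x,z],y]$. Leibniz action of $N$ on $M$: bilinear $\cdot_1\colon N\times M\to M$, $\cdot_2\colon M\times N\to M$ with $n\cdot_1[m,m']=[n\cdot_1m,m']-[n\cdot_1m',m]$; $[m,n\cdot_1m']=[m\cdot_2n,m']-[m,m']\cdot_2n$; $[m,m'\cdot_2n]=[m,m']\cdot_2n-[m\cdot_2n,m']$; $m\cdot_2[n,n']=(m\cdot_2n)\cdot_2n'-(m\cdot_2n')\cdot_2n$; $n\cdot_1(m\cdot_2n')=(n\cdot_1m)\cdot_2n'-[n,n']\cdot_1m$; $n\cdot_1(n'\cdot_1m)=[n,n']\cdot_1m-(n\cdot_1m)\cdot_2n'$. Semidirect product $M\rtimes N$: $M\times N$ with $[(m,n),(m',n')]=([m,m']+n\cdot_1m'+m\cdot_2n',[n,n'])$. Crossed module $(M,N,(\cdot_1,\cdot_2),\partial)$: action plus Leibniz homomorphism $\partial$ with $\partial(n\cdot_1m)=[n,\partial m]$, $\partial(m\cdot_2n)=[\partial m,n]$, $\partial(m)\cdot_1m'=[m,m']=m\cdot_2\partial(m')$. Braiding: bilinear $\{-,-\},\langle-,-\rangle\colon N\times N\to M$ with $\partial\{n,n'\}=[n,n']=\partial\langle n,n'\rangle$; $\{\partial m,\partial m'\}=[m,m']=\langle\partial m,\partial m'\rangle$; $\{\partial m,n\}=m\cdot_2n=\langle\partial m,n\rangle$; $\{n,\partial m\}=n\cdot_1m=\langle n,\partial m\rangle$; $\{n,[n',n'']\}=\{[n,n'],n''\}-\{[n,n''],n'\}$;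 $\langle n,[n',n'']\rangle=\{[n,n'],n''\}-\langle[n,n''],n'\rangle$; $\{n,[n',n'']\}=\{[n,n'],n''\}-\langle[n,n''],n'\rangle$; $\langle n,[n',n'']\rangle=\langle[n,n'],n''\rangle-\langle[n,n''],n'\rangle$. Homomorphism of braided crossed modules $(f_1,f_2)$: Leibniz homomorphisms $f_1\colon M\to M'$, $f_2\colon N\to N'$ with $f_1(n\cdot_1m)=f_2(n)*_1f_1(m)$, $f_1(m\cdot_2n)=f_1(m)*_2f_2(n)$, $\partial'f_1=f_2\partial$, $f_1\{n,n'\}=\{f_2n,f_2n'\}'$, $f_1\langle n,n'\rangle=\langle f_2n,f_2n'\rangle'$. These form $\mathbf{BX}(\mathbf{LeibAlg}_K)$. Categorical Leibniz algebra $(C_1,C_0,s,t,e,k)$: Leibniz homomorphisms $s,t\colon C_1\to C_0$, $e\colon C_0\to C_1$, $k\colon \{(x,y):t(x)=s(y)\}\to C_1$ forming an internal category ($se=te=\mathrm{Id}$, $sk(x,y)=s(x)$, $tk(x,y)=t(y)$, $k(es(x),x)=x=k(x,et(x))$, $k$ associative). Braiding: bilinear $\tau,\psi\colon C_0\times C_0\to C_1$ with $s(\tau_{a,b})=s(\psi_{a,b})=[a,b]$, $t(\tau_{a,b})=t(\psi_{a,b})=-[a,b]$; $k([x,y],\tau_{t x,t y})=k(\tau_{s x,s y},-[x,y])$ and likewise for $\psi$; $\tau_{a,[b,c]}=\tau_{[a,b],c}-\tau_{[a,c],b}$; $\psi_{a,[b,c]}=\tau_{[a,b],c}-\psi_{[a,c],b}$;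 $\tau_{a,[b,c]}=\tau_{[a,b],c}-\psi_{[a,c],b}$; $\psi_{a,[b,c]}=\psi_{[a,b],c}-\psi_{[a,c],b}$. Braided internal functor $(F_1,F_0)$: Leibniz homomorphisms commuting with $s,t,e,k$, with $F_1(\tau_{a,b})=\tau'_{F_0a,F_0b}$, $F_1(\psi_{a,b})=\psi'_{F_0a,F_0b}$. These form $\mathbf{BICat}(\mathbf{LeibAlg}_K)$. *)

From HB Require Import structures.
From mathcomp Require Import all_boot all_order all_algebra.
Set Implicit Arguments. Unset Strict Implicit. Unset Printing Implicit Defensive.
Import GRing.Theory.
Local Open Scope ring_scope.

Section Defs.
Variable K : fieldType.

Definition is_linear (A B : lmodType K) (f : A -> B) : Prop :=
  forall (a : K) x y, f (a *: x + y) = a *: f x + f y.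

Definition bilin (A B C : lmodType K) (f : A -> B -> C) : Prop :=
  (forall (a : K) x x' y, f (a *: x + x') y = a *: f x y + f x' y) /\
  (forall (a : K) x y y', f x (a *: y + y') = a *: f x y + f x y').

Definition is_leib (V : lmodType K) (br : V -> V -> V) : Prop :=
  bilin br /\
  forall x y z, br x (br y z) = br (br x y) z - br (br x z) y.

Definition is_lhom (V W : lmodType K) (brV : V -> V -> V) (brW : W -> W -> W)
  (f : V -> W) : Prop :=
  is_linear f /\ forall x y, f (brV x y) = brW (f x) (f y).

Definition is_action (M N : lmodType K) (brM : M -> M -> M) (brN : N -> N -> N)
  (a1 : N -> M -> M) (a2 : M -> N -> M) : Prop :=
  bilin a1 /\ bilin a2 /\
  (forall n m m', a1 n (brM m m') = brM (a1 n m) m' - brM (a1 n m') m) /\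
  (forall m n m', brM m (a1 n m') = brM (a2 m n) m' - a2 (brM m m') n) /\
  (forall m m' n, brM m (a2 m' n) = a2 (brM m m') n - brM (a2 m n) m') /\
  (forall m n n', a2 m (brN n n') = a2 (a2 m n) n' - a2 (a2 m n') n) /\
  (forall n m n', a1 n (a2 m n') = a2 (a1 n m) n' - a1 (brN n n') m) /\
  (forall n n' m, a1 n (a1 n' m) = a1 (brN n n') m - a2 (a1 n m) n').

Definition is_xmod (M N : lmodType K) (brM : M -> M -> M) (brN : N -> N -> N)
  (a1 : N -> M -> M) (a2 : M -> N -> M) (d : M -> N) : Prop :=
  is_leib brM /\ is_leib brN /\ is_action brM brN a1 a2 /\
  is_lhom brM brN d /\
  (forall n m, d (a1 n m) = brN n (d m)) /\
  (forall m n, d (a2 m n) = brN (d m) n) /\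
  (forall m m', a1 (d m) m' = brM m m') /\
  (forall m m', brM m m' = a2 m (d m')).

(** Braided crossed module (braiding {-,-} = cb, <-,-> = ab). *)
Definition is_bxmod (M N : lmodType K) (brM : M -> M -> M) (brN : N -> N -> N)
  (a1 : N -> M -> M) (a2 : M -> N -> M) (d : M -> N)
  (cb ab : N -> N -> M) : Prop :=
  is_xmod brM brN a1 a2 d /\
  bilin cb /\ bilin ab /\
  (forall n n', d (cb n n') = brN n n') /\
  (forall n n', d (ab n n') = brN n n') /\
  (forall m m', cb (d m) (d m') = brM m m') /\
  (forall m m', ab (d m) (d m') = brM m m') /\
  (forall m n, cb (d m) n = a2 m n) /\
  (forall m n, ab (d m) n = a2 m n) /\
  (forall n m, cb n (d m) = a1 n m) /\
  (forall n m, ab n (d m) = a1 n m) /\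
  (forall n n' n'', cb n (brN n' n'') = cb (brN n n') n'' - cb (brN n n'') n') /\
  (forall n n' n'', ab n (brN n' n'') = cb (brN n n') n'' - ab (brN n n'') n') /\
  (forall n n' n'', cb n (brN n' n'') = cb (brN n n') n'' - ab (brN n n'') n') /\
  (forall n n' n'', ab n (brN n' n'') = ab (brN n n') n'' - ab (brN n n'') n').

Definition is_bxhom (M N M' N' : lmodType K)
  (brM : M -> M -> M) (brN : N -> N -> N) (a1 : N -> M -> M) (a2 : M -> N -> M)
  (d : M -> N) (cb ab : N -> N -> M)
  (brM' : M' -> M' -> M') (brN' : N' -> N' -> N') (a1' : N' -> M' -> M')
  (a2' : M' -> N' -> M') (d' : M' -> N') (cb' ab' : N' -> N' -> M')
  (f1 : M -> M') (f2 : N -> N') : Prop :=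
  is_lhom brM brM' f1 /\ is_lhom brN brN' f2 /\
  (forall n m, f1 (a1 n m) = a1' (f2 n) (f1 m)) /\
  (forall m n, f1 (a2 m n) = a2' (f1 m) (f2 n)) /\
  (forall m, d' (f1 m) = f2 (d m)) /\
  (forall n n', f1 (cb n n') = cb' (f2 n) (f2 n')) /\
  (forall n n', f1 (ab n n') = ab' (f2 n) (f2 n')).

(** The composition k is defined on the
    pullback {(x,y) | t x = s y}; it is represented by a total function of
    which only the values on composable pairs matter. *)
Definition is_bicat (C1 C0 : lmodType K) (br1 : C1 -> C1 -> C1)
  (br0 : C0 -> C0 -> C0) (s t : C1 -> C0) (e : C0 -> C1) (k : C1 -> C1 -> C1)
  (tau psi : C0 -> C0 -> C1) : Prop :=
  is_leib br1 /\ is_leib br0 /\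
  is_lhom br1 br0 s /\ is_lhom br1 br0 t /\ is_lhom br0 br1 e /\
  (forall (a : K) x y x' y', t x = s y -> t x' = s y' ->
      k (a *: x + x') (a *: y + y') = a *: k x y + k x' y') /\
  (forall x y x' y', t x = s y -> t x' = s y' ->
      k (br1 x x') (br1 y y') = br1 (k x y) (k x' y')) /\
  (forall a, s (e a) = a) /\ (forall a, t (e a) = a) /\
  (forall x y, t x = s y -> s (k x y) = s x) /\
  (forall x y, t x = s y -> t (k x y) = t y) /\
  (forall x, k (e (s x)) x = x) /\ (forall x, k x (e (t x)) = x) /\
  (forall x y z, t x = s y -> t y = s z -> k (k x y) z = k x (k y z)) /\
  bilin tau /\ bilin psi /\
  (forall a b, s (tau a b) = br0 a b) /\ (forall a b, s (psi a b) = br0 a b) /\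
  (forall a b, t (tau a b) = - br0 a b) /\ (forall a b, t (psi a b) = - br0 a b) /\
  (forall x y, k (br1 x y) (tau (t x) (t y)) = k (tau (s x) (s y)) (- br1 x y)) /\
  (forall x y, k (br1 x y) (psi (t x) (t y)) = k (psi (s x) (s y)) (- br1 x y)) /\
  (forall a b c, tau a (br0 b c) = tau (br0 a b) c - tau (br0 a c) b) /\
  (forall a b c, psi a (br0 b c) = tau (br0 a b) c - psi (br0 a c) b) /\
  (forall a b c, tau a (br0 b c) = tau (br0 a b) c - psi (br0 a c) b) /\
  (forall a b c, psi a (br0 b c) = psi (br0 a b) c - psi (br0 a c) b).

Definition is_bifun (C1 C0 D1 D0 : lmodType K)
  (br1 : C1 -> C1 -> C1) (br0 : C0 -> C0 -> C0) (s t : C1 -> C0) (e : C0 -> C1)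
  (k : C1 -> C1 -> C1) (tau psi : C0 -> C0 -> C1)
  (br1' : D1 -> D1 -> D1) (br0' : D0 -> D0 -> D0) (s' t' : D1 -> D0)
  (e' : D0 -> D1) (k' : D1 -> D1 -> D1) (tau' psi' : D0 -> D0 -> D1)
  (F1 : C1 -> D1) (F0 : C0 -> D0) : Prop :=
  is_lhom br1 br1' F1 /\ is_lhom br0 br0' F0 /\
  (forall x, s' (F1 x) = F0 (s x)) /\ (forall x, t' (F1 x) = F0 (t x)) /\
  (forall a, F1 (e a) = e' (F0 a)) /\
  (forall x y, t x = s y -> F1 (k x y) = k' (F1 x) (F1 y)) /\
  (forall a b, F1 (tau a b) = tau' (F0 a) (F0 b)) /\
  (forall a b, F1 (psi a b) = psi' (F0 a) (F0 b)).

Definition sd_br (M N : lmodType K) (brM : M -> M -> M) (brN : N -> N -> N)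
  (a1 : N -> M -> M) (a2 : M -> N -> M) (x y : M * N) : M * N :=
  (brM x.1 y.1 + a1 x.2 y.1 + a2 x.1 y.2, brN x.2 y.2).

Definition sbar (M N : lmodType K) (x : M * N) : N := x.2.
Definition tbar (M N : lmodType K) (d : M -> N) (x : M * N) : N := d x.1 + x.2.
Definition ebar (M N : lmodType K) (n : N) : M * N := (0, n).
Definition kbar (M N : lmodType K) (x y : M * N) : M * N := (x.1 + y.1, x.2).
Definition taubar (M N : lmodType K) (brN : N -> N -> N) (cb : N -> N -> M)
  (n n' : N) : M * N := ((- 2%:R : K) *: cb n n', brN n n').
Definition Cmor (M N M' N' : lmodType K) (f1 : M -> M') (f2 : N -> N')
  (x : M * N) : M' * N' := (f1 x.1, f2 x.2).

End Defs.

(* An arrow (m, n) of M ⋊ N goes from n to ∂m + n, and composition adds the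
   M-parts.  Composition is a Leibniz homomorphism on composable pairs exactly
   because of the Peiffer identities ∂m·m' = [m, m'] = m·∂m'.  For the braiding,
   the axioms relating {-,-} to ∂ give
     {∂m + n, ∂m' + n'} = [(m,n), (m',n')].1 + {n, n'},
   so the M-part of τ̄ at the targets differs from the one at the sources by
   -2 [(m,n), (m',n')].1, which is exactly what the naturality square of τ̄
   requires. *)

From mathcomp Require Import all_boot all_order all_algebra.
From Stdlib Require Import FunctionalExtensionality.
Import GRing.Theory.
Local Open Scope ring_scope.

Section Linear.
Context {K : fieldType} {A B : lmodType K} {f : A -> B}.
Hypothesis fL : is_linear f.

Lemma is_linearD x y : f (x + y) = f x + f y.
Proof. by have := fL 1 x y; rewrite !scale1r. Qed.

Lemma is_linear0 : f 0 = 0.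
Proof. by apply: (addrI (f 0)); rewrite -is_linearD !addr0. Qed.

Lemma is_linearZ a x : f (a *: x) = a *: f x.
Proof. by have := fL a x 0; rewrite !addr0 is_linear0 addr0. Qed.

Lemma is_linearN x : f (- x) = - f x.
Proof. by rewrite -scaleN1r is_linearZ scaleN1r. Qed.

End Linear.

Section Bilinear.
Context {K : fieldType} {A B C : lmodType K} {f : A -> B -> C}.
Hypothesis fB : bilin f.

Lemma bilin_linl y : is_linear (f^~ y).
Proof. by move=> a x x'; apply: fB.1. Qed.

Lemma bilin_linr x : is_linear (f x).
Proof. by move=> a y y'; apply: fB.2. Qed.

Lemma bilinDl x x' y : f (x + x') y = f x y + f x' y.
Proof. exact: (is_linearD (bilin_linl y)). Qed.

Lemma bilinDr x y y' : f x (y + y') = f x y + f x y'.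
Proof. exact: (is_linearD (bilin_linr x)). Qed.

Lemma bilinZl a x y : f (a *: x) y = a *: f x y.
Proof. exact: (is_linearZ (bilin_linl y)). Qed.

Lemma bilinZr a x y : f x (a *: y) = a *: f x y.
Proof. exact: (is_linearZ (bilin_linr x)). Qed.

Lemma bilinNl x y : f (- x) y = - f x y.
Proof. exact: (is_linearN (bilin_linl y)). Qed.

Lemma bilinNr x y : f x (- y) = - f x y.
Proof. exact: (is_linearN (bilin_linr x)). Qed.

Lemma bilin0l y : f 0 y = 0.
Proof. exact: (is_linear0 (bilin_linl y)). Qed.

Lemma bilin0r x : f x 0 = 0.
Proof. exact: (is_linear0 (bilin_linr x)). Qed.

End Bilinear.

Ltac lin_expand :=
  repeat (first
    [ progress rewrite ?add0r ?addr0 ?scalerDr ?scalerN ?scaleNr ?scaler0 ?oppr0 ?opprK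
    | match goal with fB : bilin _ |- _ =>
        progress rewrite ?(bilinDl fB) ?(bilinDr fB) ?(bilinZl fB) ?(bilinZr fB)
          ?(bilinNl fB) ?(bilinNr fB) ?(bilin0l fB) ?(bilin0r fB) end
    | match goal with fL : is_linear _ |- _ =>
        progress rewrite ?(is_linearD fL) ?(is_linearZ fL) ?(is_linearN fL)
          ?(is_linear0 fL) end ]).

(* Closes an equation between two sums of the same (possibly negated) atoms in
   different orders: each summand on the left is moved to the end of the right
   side and cancelled. *)
Ltac zmod_ac :=
  rewrite ?opprD ?opprK ?addr0 ?add0r ?addrA;
  repeat match goal with
  | |- _ = _ => reflexivity
  | |- _ + ?x = _ =>
      rewrite ?[in RHS](addrC x); do 30 (try rewrite [in RHS](addrAC _ x)); f_equal
  end.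

Section Semidirect.
Context {K : fieldType} {M N : lmodType K}.
Context {brM : M -> M -> M} {brN : N -> N -> N}.
Context {a1 : N -> M -> M} {a2 : M -> N -> M}.
Hypotheses (leibM : is_leib brM) (leibN : is_leib brN).
Hypothesis act : is_action brM brN a1 a2.

Lemma sd_br_bilin : bilin (sd_br brM brN a1 a2).
Proof.
have [[bM _] [[bN _] [b1 [b2 _]]]] := (leibM, (leibN, act)).
by split=> a [m n] [m' n'] [m'' n'']; apply: injective_projections;
  rewrite /sd_br /=; lin_expand; zmod_ac.
Qed.

Lemma sd_br_leib : is_leib (sd_br brM brN a1 a2).
Proof.
have [[bM jacM] [[bN jacN] [b1 [b2 [a1brM [brMa1 [brMa2 [a2brN [a1a2 a1a1]]]]]]]]] :=
  (leibM, (leibN, act)).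
split; first exact: sd_br_bilin.
move=> [m n] [m' n'] [m'' n'']; apply: injective_projections;
  rewrite /sd_br /=; last exact: jacN.
lin_expand; rewrite [in LHS]jacM [in LHS]brMa1 [in LHS]brMa2 [in LHS]a1brM [in LHS]a1a1
  [in LHS]a1a2 [in LHS]a2brN.
zmod_ac.
Qed.

Lemma ebar_lhom : is_lhom brN (sd_br brM brN a1 a2) (@ebar K M N).
Proof.
have [[bM _] [b1 [b2 _]]] := (leibM, act).
by split=> [a n n' | n n']; apply: injective_projections;
  rewrite /ebar /sd_br /=; lin_expand.
Qed.

End Semidirect.

Section CrossedModule.
Context {K : fieldType} {M N : lmodType K}.
Context {brM : M -> M -> M} {brN : N -> N -> N}.
Context {a1 : N -> M -> M} {a2 : M -> N -> M} {d : M -> N}.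
Hypothesis xmod : is_xmod brM brN a1 a2 d.

Local Notation br := (sd_br brM brN a1 a2).
Local Notation tgt := (tbar d).
Local Notation src := (@sbar K M N).
Local Notation idn := (@ebar K M N).

Lemma tbar_lhom : is_lhom br brN tgt.
Proof.
have [_ [[bN _] [_ [[dL dbr] [da1 [da2 _]]]]]] := xmod.
split=> [a [m n] [m' n'] | [m n] [m' n']]; rewrite /tbar /sd_br /=; lin_expand.
  by zmod_ac.
by rewrite dbr da1 da2; zmod_ac.
Qed.

Lemma kbar_linear (a : K) (x y x' y' : M * N) :
  kbar (a *: x + x') (a *: y + y') = a *: kbar x y + kbar x' y'.
Proof.
case: x y x' y' => [m n] [p q] [m' n'] [p' q'].
by apply: injective_projections; rewrite /kbar /=; lin_expand; zmod_ac.
Qed.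

Lemma kbar_br x y x' y' : tgt x = src y -> tgt x' = src y' ->
  kbar (br x x') (br y y') = br (kbar x y) (kbar x' y').
Proof.
have [[bM _] [_ [[b1 [b2 _]] [_ [_ [_ [peifferL peifferR]]]]]]] := xmod.
case: x y x' y' => [m n] [p q] [m' n'] [p' q']; rewrite /tbar /sbar /= => <- <-.
apply: injective_projections; rewrite /kbar /sd_br /= //; lin_expand.
by rewrite peifferL -peifferR; zmod_ac.
Qed.

Lemma tbar_kbar x y : tgt x = src y -> tgt (kbar x y) = tgt y.
Proof.
have [_ [_ [_ [[dL _] _]]]] := xmod.
by case: x y => [m n] [p q]; rewrite /tbar /sbar /kbar /= => <-; lin_expand; zmod_ac.
Qed.

Lemma tbar_ebar n : tgt (idn n) = n.
Proof. by have [_ [_ [_ [[dL _] _]]]] := xmod; rewrite /tbar /= (is_linear0 dL) add0r. Qed.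

Lemma kbar_ebar_sbar (x : M * N) : kbar (idn (src x)) x = x.
Proof. by case: x => m n; rewrite /kbar /= add0r. Qed.

Lemma kbar_ebar_tbar x : kbar x (idn (tgt x)) = x.
Proof. by case: x => m n; rewrite /kbar /= addr0. Qed.

Lemma kbarA (x y z : M * N) : kbar (kbar x y) z = kbar x (kbar y z).
Proof. by rewrite /kbar /= addrA. Qed.

End CrossedModule.

Lemma scaleN2r (K : fieldType) (V : lmodType K) (v : V) : (- 2%:R : K) *: v = - v - v.
Proof. by rewrite scaleNr scaler_nat mulr2n opprD. Qed.

Section Taubar.
Context {K : fieldType} {M N : lmodType K} {brN : N -> N -> N}.

Lemma taubar_bilin {beta : N -> N -> M} :
  bilin brN -> bilin beta -> bilin (taubar brN beta).
Proof.
move=> bN betaB; split=> a x x' y; apply: injective_projections; rewrite /taubar /=;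
  lin_expand; rewrite ?scalerA ?(mulrC a); zmod_ac.
Qed.

Lemma taubar_leibniz {beta1 beta2 beta3 : N -> N -> M} : is_leib brN ->
  (forall a b c, beta1 a (brN b c) = beta2 (brN a b) c - beta3 (brN a c) b) ->
  forall a b c, taubar brN beta1 a (brN b c) =
                taubar brN beta2 (brN a b) c - taubar brN beta3 (brN a c) b.
Proof.
move=> [_ jacN] beta_leib a b c.
by apply: injective_projections; rewrite /taubar /= ?beta_leib ?jacN // scalerBr.
Qed.

End Taubar.

Section Braiding.
Context {K : fieldType} {M N : lmodType K}.
Context {brM : M -> M -> M} {brN : N -> N -> N}.
Context {a1 : N -> M -> M} {a2 : M -> N -> M} {d : M -> N} {beta : N -> N -> M}.
Hypotheses (dL : is_linear d) (betaB : bilin beta).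
Hypothesis d_beta : forall n n', d (beta n n') = brN n n'.
Hypothesis beta_dd : forall m m', beta (d m) (d m') = brM m m'.
Hypothesis beta_dl : forall m n, beta (d m) n = a2 m n.
Hypothesis beta_dr : forall n m, beta n (d m) = a1 n m.

Local Notation br := (sd_br brM brN a1 a2).
Local Notation tgt := (tbar d).
Local Notation src := (@sbar K M N).
Local Notation tau := (taubar brN beta).

Lemma tbar_taubar a b : tgt (tau a b) = - brN a b.
Proof. by rewrite /tbar /taubar /= (is_linearZ dL) d_beta scaleN2r addrNK. Qed.

Lemma beta_tbar x y : beta (tgt x) (tgt y) = (br x y).1 + beta x.2 y.2.
Proof.
case: x y => [m n] [m' n']; rewrite /tbar /sd_br /=; lin_expand.
by rewrite beta_dd beta_dl beta_dr; zmod_ac.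
Qed.

Lemma kbar_taubar x y :
  kbar (br x y) (tau (tgt x) (tgt y)) = kbar (tau (src x) (src y)) (- br x y).
Proof.
rewrite /kbar /taubar /= beta_tbar.
have cancel_b (b c : M) : b + (- 2%:R : K) *: (b + c) = (- 2%:R : K) *: c - b.
  by rewrite scalerDr scaleN2r -!addrA addNKr addrC.
by apply: injective_projections; [exact: cancel_b | ].
Qed.

End Braiding.

Section Morphism.
Context {K : fieldType} {M N M' N' : lmodType K}.
Context {brM : M -> M -> M} {brN : N -> N -> N} {a1 : N -> M -> M} {a2 : M -> N -> M}.
Context {brM' : M' -> M' -> M'} {brN' : N' -> N' -> N'}.
Context {a1' : N' -> M' -> M'} {a2' : M' -> N' -> M'}.
Context {f1 : M -> M'} {f2 : N -> N'}.
Hypotheses (f1hom : is_lhom brM brM' f1) (f2hom : is_lhom brN brN' f2).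

Local Notation F := (Cmor f1 f2).

Lemma Cmor_lhom :
  (forall n m, f1 (a1 n m) = a1' (f2 n) (f1 m)) ->
  (forall m n, f1 (a2 m n) = a2' (f1 m) (f2 n)) ->
  is_lhom (sd_br brM brN a1 a2) (sd_br brM' brN' a1' a2') F.
Proof.
have [[f1L f1br] [f2L f2br]] := (f1hom, f2hom).
move=> f1a1 f1a2; split=> [a [m n] [m' n'] | [m n] [m' n']];
  apply: injective_projections; rewrite /Cmor /sd_br /= ?f2br //; lin_expand.
by rewrite f1br f1a1 f1a2.
Qed.

Lemma tbar_Cmor {d : M -> N} {d' : M' -> N'} :
  (forall m, d' (f1 m) = f2 (d m)) -> forall x, tbar d' (F x) = f2 (tbar d x).
Proof. by have [f2L _] := f2hom; move=> d'f1 x; rewrite /tbar d'f1 (is_linearD f2L). Qed.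

Lemma ebar_Cmor n : F (ebar M n) = ebar M' (f2 n).
Proof. by have [f1L _] := f1hom; rewrite /Cmor /ebar /= (is_linear0 f1L). Qed.

Lemma kbar_Cmor x y : F (kbar x y) = kbar (F x) (F y).
Proof. by have [f1L _] := f1hom; rewrite /Cmor /kbar /= (is_linearD f1L). Qed.

Lemma taubar_Cmor {beta : N -> N -> M} {beta' : N' -> N' -> M'} :
  (forall n n', f1 (beta n n') = beta' (f2 n) (f2 n')) ->
  forall a b, F (taubar brN beta a b) = taubar brN' beta' (f2 a) (f2 b).
Proof.
have [[f1L _] [_ f2br]] := (f1hom, f2hom).
by move=> f1beta a b; rewrite /Cmor /taubar /= (is_linearZ f1L) f1beta f2br.
Qed.

End Morphism.

Lemma Cmor_id (K : fieldType) (M N : lmodType K) : Cmor (@id M) (@id N) = id.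
Proof. by apply: functional_extensionality => -[]. Qed.

Lemma bxmod_bicat (K : fieldType) (M N : lmodType K) (brM : M -> M -> M)
  (brN : N -> N -> N) (a1 : N -> M -> M) (a2 : M -> N -> M) (d : M -> N)
  (cb ab : N -> N -> M) :
  is_bxmod brM brN a1 a2 d cb ab ->
  is_bicat (sd_br brM brN a1 a2) brN (@sbar K M N) (tbar d) (@ebar K M N)
    (@kbar K M N) (taubar brN cb) (taubar brN ab).
Proof.
move=> [xmod [cbB [abB [d_cb [d_ab [cb_dd [ab_dd [cb_dl [ab_dl [cb_dr [ab_dr
  [cb_leib [ab_cb_leib [cb_ab_leib ab_leib]]]]]]]]]]]]]].
have [leibM [leibN [act [[dL _] _]]]] := xmod.
split; first exact: sd_br_leib leibM leibN act.
split; first exact: leibN.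
split; first by split.
split; first exact: tbar_lhom xmod.
split; first exact: ebar_lhom leibM act.
split; first by move=> *; apply: kbar_linear.
split; first exact: kbar_br xmod.
split; first by [].
split; first exact: tbar_ebar xmod.
split; first by [].
split; first exact: tbar_kbar xmod.
split; first exact: kbar_ebar_sbar.
split; first exact: kbar_ebar_tbar.
split; first by move=> *; apply: kbarA.
split; first exact: taubar_bilin leibN.1 cbB.
split; first exact: taubar_bilin leibN.1 abB.
do 2 (split; first by []).
split; first exact: tbar_taubar dL d_cb.
split; first exact: tbar_taubar dL d_ab.
split; first exact: kbar_taubar cbB cb_dd cb_dl cb_dr.
split; first exact: kbar_taubar abB ab_dd ab_dl ab_dr.
split; first exact: taubar_leibniz leibN cb_leib.
split; first exact: taubar_leibniz leibN ab_cb_leib.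
split; first exact: taubar_leibniz leibN cb_ab_leib.
exact: taubar_leibniz leibN ab_leib.
Qed.

Lemma bxhom_bifun (K : fieldType) (M N M' N' : lmodType K)
  (brM : M -> M -> M) (brN : N -> N -> N) (a1 : N -> M -> M)
  (a2 : M -> N -> M) (d : M -> N) (cb ab : N -> N -> M)
  (brM' : M' -> M' -> M') (brN' : N' -> N' -> N') (a1' : N' -> M' -> M')
  (a2' : M' -> N' -> M') (d' : M' -> N') (cb' ab' : N' -> N' -> M')
  (f1 : M -> M') (f2 : N -> N') :
  is_bxhom brM brN a1 a2 d cb ab brM' brN' a1' a2' d' cb' ab' f1 f2 ->
  is_bifun (sd_br brM brN a1 a2) brN (@sbar K M N) (tbar d) (@ebar K M N)
    (@kbar K M N) (taubar brN cb) (taubar brN ab)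
    (sd_br brM' brN' a1' a2') brN' (@sbar K M' N') (tbar d') (@ebar K M' N')
    (@kbar K M' N') (taubar brN' cb') (taubar brN' ab')
    (Cmor f1 f2) f2.
Proof.
move=> [f1hom [f2hom [f1a1 [f1a2 [d'f1 [f1cb f1ab]]]]]].
split; first exact: Cmor_lhom f1hom f2hom f1a1 f1a2.
split; first exact: f2hom.
split; first by [].
split; first exact (tbar_Cmor f2hom d'f1).
split; first exact: ebar_Cmor f1hom.
split; first by move=> x y _; rewrite (kbar_Cmor f1hom).
split; first exact (taubar_Cmor f1hom f2hom f1cb).
exact (taubar_Cmor f1hom f2hom f1ab).
Qed.

Theorem mainTheorem3 (K : fieldType) (hK : ~~ (2%N \in [pchar K])) :
  (* object part: C_X is a braided categorical Leibniz algebra *)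
  (forall (M N : lmodType K) (brM : M -> M -> M) (brN : N -> N -> N)
     (a1 : N -> M -> M) (a2 : M -> N -> M) (d : M -> N) (cb ab : N -> N -> M),
     is_bxmod brM brN a1 a2 d cb ab ->
     is_bicat (sd_br brM brN a1 a2) brN (@sbar K M N) (tbar d) (@ebar K M N)
       (@kbar K M N) (taubar brN cb) (taubar brN ab)) /\
  (* morphism part: (f1 x f2, f2) is a braided internal functor *)
  (forall (M N M' N' : lmodType K)
     (brM : M -> M -> M) (brN : N -> N -> N) (a1 : N -> M -> M)
     (a2 : M -> N -> M) (d : M -> N) (cb ab : N -> N -> M)
     (brM' : M' -> M' -> M') (brN' : N' -> N' -> N') (a1' : N' -> M' -> M')
     (a2' : M' -> N' -> M') (d' : M' -> N') (cb' ab' : N' -> N' -> M')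
     (f1 : M -> M') (f2 : N -> N'),
     is_bxmod brM brN a1 a2 d cb ab ->
     is_bxmod brM' brN' a1' a2' d' cb' ab' ->
     is_bxhom brM brN a1 a2 d cb ab brM' brN' a1' a2' d' cb' ab' f1 f2 ->
     is_bifun (sd_br brM brN a1 a2) brN (@sbar K M N) (tbar d) (@ebar K M N)
       (@kbar K M N) (taubar brN cb) (taubar brN ab)
       (sd_br brM' brN' a1' a2') brN' (@sbar K M' N') (tbar d') (@ebar K M' N')
       (@kbar K M' N') (taubar brN' cb') (taubar brN' ab')
       (Cmor f1 f2) f2) /\
  (* functoriality: identities and composites are preserved *)
  (forall (M N : lmodType K), Cmor (@id M) (@id N) = id) /\
  (forall (M N M' N' M'' N'' : lmodType K) (f1 : M -> M') (f2 : N -> N')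
     (g1 : M' -> M'') (g2 : N' -> N''),
     Cmor (g1 \o f1) (g2 \o f2) = Cmor g1 g2 \o Cmor f1 f2).
Proof.
split; first exact: bxmod_bicat.
split; first by move=> *; apply: bxhom_bifun.
split; first exact: Cmor_id.
by [].
Qed.
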